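(* Let $\psi\in C^1((0,\infty))$, $d>0$, and let $G=(V,E)$ be a finite graph satisfying $CD\psi(d,0)$. Let $u$ be a positive solution to the heat equation on $G$. Then for all $x\in V$ and $t>0$, \[ -\Delta^\psi u(x,t)\le\frac{d}{2t}. \]
   Context: A finite graph $G=(V,E)$: finite set $V$, irreflexive symmetric relation $E$; $v\sim w$ iff $(v,w)\in E$. $C^+(V)$: positive functions on $V$. Laplacian $\Delta f(v)=\sum_{w\sim v}(f(w)-f(v))$. For $f\in C^+(V)$: $(\Delta^\psi f)(v):=\Delta\big[\psi\big(\tfrac{f}{f(v)}\big)\big](v)$; $(\Omega^\psi f)(v):=\Delta\Big[\psi'\big(\tfrac{f}{f(v)}\big)\cdot\tfrac{f}{f(v)}\cdot\big(\tfrac{\Delta f}{f}-\tfrac{(\Delta f)(v)}{f(v)}\big)\Big](v)$; $2\Gamma_2^\psi(f):=\Omega^\psi f+\frac{\Delta f\,\Delta^\psi f}{f}-\frac{\Delta(f\,\Delta^\psi f)}{f}$. $G$ satisfies $CD\psi(d,0)$ if $\Gamma_2^\psi(f)\ge\frac1d(\Delta^\psi f)^2$ for all $f\in C^+(V)$. A solution to the heat equation on $G$ is $u:V\times[0,\infty)\to\mathbb{R}$, continuously differentiable in $t$, with $\Delta u-\partial_t u=0$; $\Delta^\psi u(x,t)$ means $(\Delta^\psi u(\cdot,t))(x)$. *)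

From Stdlib Require Import Reals Lra List.
Import ListNotations.
Open Scope R_scope.

Definition finite_graph {V : Type} (vs : list V) (adj : V -> V -> bool) : Prop :=
  NoDup vs /\ (forall v, In v vs) /\
  (forall v, adj v v = false) /\ (forall v w, adj v w = adj w v).

Definition lap {V : Type} (vs : list V) (adj : V -> V -> bool)
  (f : V -> R) (v : V) : R :=
  fold_right Rplus 0 (map (fun w => f w - f v) (filter (adj v) vs)).

Definition lap_psi {V : Type} (vs : list V) (adj : V -> V -> bool)
  (psi : R -> R) (f : V -> R) (v : V) : R :=
  lap vs adj (fun w => psi (f w / f v)) v.

Definition Omega_psi {V : Type} (vs : list V) (adj : V -> V -> bool)
  (dpsi : R -> R) (f : V -> R) (v : V) : R :=
  lap vs adj (fun w => dpsi (f w / f v) * (f w / f v) *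
                        (lap vs adj f w / f w - lap vs adj f v / f v)) v.

(* Γ_2^ψ(f), defined via 2Γ_2^ψ(f) = Ω^ψ f + Δf Δ^ψ f / f - Δ(f Δ^ψ f)/f *)
Definition Gamma2_psi {V : Type} (vs : list V) (adj : V -> V -> bool)
  (psi dpsi : R -> R) (f : V -> R) (v : V) : R :=
  (Omega_psi vs adj dpsi f v
   + lap vs adj f v * lap_psi vs adj psi f v / f v
   - lap vs adj (fun w => f w * lap_psi vs adj psi f w) v / f v) / 2.

Definition CD_psi {V : Type} (vs : list V) (adj : V -> V -> bool)
  (psi dpsi : R -> R) (d : R) : Prop :=
  forall f : V -> R, (forall v, 0 < f v) ->
    forall v, Gamma2_psi vs adj psi dpsi f v >= / d * (lap_psi vs adj psi f v) ^ 2.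

Definition C1_pos (psi dpsi : R -> R) : Prop :=
  forall x, 0 < x -> derivable_pt_lim psi x (dpsi x) /\ continuity_pt dpsi x.

Definition deriv_nonneg (g : R -> R) (t l : R) : Prop :=
  forall eps, 0 < eps -> exists del, 0 < del /\
    forall h, h <> 0 -> Rabs h < del -> 0 <= t + h ->
      Rabs ((g (t + h) - g t) / h - l) < eps.

Definition cont_nonneg (g : R -> R) (t : R) : Prop :=
  forall eps, 0 < eps -> exists del, 0 < del /\
    forall s, 0 <= s -> Rabs (s - t) < del -> Rabs (g s - g t) < eps.

Definition heat_solution {V : Type} (vs : list V) (adj : V -> V -> bool)
  (u ut : V -> R -> R) : Prop :=
  forall x t, 0 <= t ->
    deriv_nonneg (u x) t (ut x t) /\ cont_nonneg (ut x) t /\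
    lap vs adj (fun y => u y t) x - ut x t = 0.

(* Li–Yau maximum principle.  Fix 0 < eps <= T and maximise
   F(y, r) = (r - eps) (- Δ^ψ u(y, r)) over V × [eps, T].  At an interior
   maximiser (y, s) the vertex y minimises Δ^ψ u(., s), so Δ(u Δ^ψ u)(y) >=
   Δ^ψ u(y) Δu(y) and CDψ(d,0) gives Ω^ψ u >= (2/d) (Δ^ψ u)^2 at (y, s); along
   the heat flow ∂_t Δ^ψ u = Ω^ψ u, so ∂_t F(y, s) >= 0 forces F(y, s) <= d/2.
   Letting eps -> 0 yields t (- Δ^ψ u(x, t)) <= d/2. *)
From Stdlib Require Import Reals List Lra.
Open Scope R_scope.

Lemma fold_right_Rplus_map_le {A : Type} (f g : A -> R) (l : list A) :
  (forall a, In a l -> f a <= g a) ->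
  fold_right Rplus 0 (map f l) <= fold_right Rplus 0 (map g l).
Proof.
  induction l as [|a l IH]; intros Hfg; simpl; [lra|].
  pose proof (Hfg a (or_introl eq_refl)).
  pose proof (IH (fun b Hb => Hfg b (or_intror Hb))). lra.
Qed.

Lemma fold_right_Rplus_map_scal {A : Type} (c : R) (f : A -> R) (l : list A) :
  fold_right Rplus 0 (map (fun a => c * f a) l) = c * fold_right Rplus 0 (map f l).
Proof. induction l as [|a l IH]; simpl; [ring|]. rewrite IH. ring. Qed.

Lemma derivable_pt_lim_fold_right_Rplus {A : Type} (g : A -> R -> R) (g' : A -> R)
  (l : list A) (s : R) :
  (forall a, In a l -> derivable_pt_lim (g a) s (g' a)) ->
  derivable_pt_lim (fun r => fold_right Rplus 0 (map (fun a => g a r) l)) s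
    (fold_right Rplus 0 (map g' l)).
Proof.
  induction l as [|a l IH]; intros Hg; simpl.
  - apply derivable_pt_lim_const.
  - exact (derivable_pt_lim_plus (g a) _ s _ _ (Hg a (or_introl eq_refl))
             (IH (fun b Hb => Hg b (or_intror Hb)))).
Qed.

Lemma deriv_nonneg_derivable_pt_lim (f : R -> R) (s l : R) :
  0 < s -> deriv_nonneg f s l -> derivable_pt_lim f s l.
Proof.
  intros Hs Hf eps Heps. destruct (Hf eps Heps) as [del [Hdel Hlim]].
  exists (mkposreal (Rmin del s) (Rmin_pos _ _ Hdel Hs)). intros h Hh Habs; simpl in Habs.
  pose proof (Rmin_l del s). pose proof (Rmin_r del s).
  apply Hlim; [exact Hh | lra |].
  destruct (Rabs_def2 h (Rmin del s)); lra.
Qed.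

Lemma derivable_pt_lim_ge0_at_left_max (f : R -> R) (s l del : R) :
  0 < del -> derivable_pt_lim f s l ->
  (forall h, - del < h < 0 -> f (s + h) <= f s) -> 0 <= l.
Proof.
  intros Hdel Hf Hmax. apply Rnot_lt_le. intros Hl.
  destruct (Hf (- l) ltac:(lra)) as [e He].
  pose proof (Rmin_pos _ _ (cond_pos e) Hdel). pose proof (Rmin_l e del).
  pose proof (Rmin_r e del).
  set (h := - Rmin e del / 2).
  assert (Hh : - del < h < 0) by (unfold h; lra).
  assert (Habs : Rabs h < e) by (rewrite Rabs_left; unfold h in *; lra).
  specialize (He h ltac:(lra) Habs).
  assert (Hquot : 0 <= (f (s + h) - f s) / h).
  { replace ((f (s + h) - f s) / h) with ((f s - f (s + h)) / - h) by (field; lra).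
    specialize (Hmax h Hh).
    apply Rmult_le_pos; [lra | left; apply Rinv_0_lt_compat; lra]. }
  destruct (Rabs_def2 _ _ He). lra.
Qed.

Lemma continuity_ab_maj_list {A : Type} (G : A -> R -> R) (a b : R) (y0 : A) (l : list A) :
  a <= b -> (forall y c, a <= c <= b -> continuity_pt (G y) c) ->
  exists y s, a <= s <= b /\
    forall z, In z (y0 :: l) -> forall r, a <= r <= b -> G z r <= G y s.
Proof.
  intros Hab HG. induction l as [|z l IH].
  - destruct (continuity_ab_maj (G y0) a b Hab (HG y0)) as [s [Hmax Hs]].
    exists y0, s. split; [exact Hs|]. intros z [<-|[]]. exact Hmax.
  - destruct IH as [y [s [Hs Hmax]]].
    destruct (continuity_ab_maj (G z) a b Hab (HG z)) as [s' [Hmax' Hs']].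
    destruct (Rle_or_lt (G z s') (G y s)) as [Hle|Hlt].
    + exists y, s. split; [exact Hs|]. intros w [<-|[<-|Hw]] r Hr.
      * apply Hmax; [now left | exact Hr].
      * exact (Rle_trans _ _ _ (Hmax' r Hr) Hle).
      * apply Hmax; [now right | exact Hr].
    + exists z, s'. split; [exact Hs'|]. intros w [<-|[<-|Hw]] r Hr.
      * assert (G y0 r <= G y s) by (apply Hmax; [now left | exact Hr]). lra.
      * exact (Hmax' r Hr).
      * assert (G w r <= G y s) by (apply Hmax; [now right | exact Hr]). lra.
Qed.

Section GraphOperators.

Variables (V : Type) (vs : list V) (adj : V -> V -> bool).

Lemma lap_mul_ge_at_min (f g : V -> R) (v : V) :
  (forall w, 0 <= f w) -> (forall w, g v <= g w) ->
  g v * lap vs adj f v <= lap vs adj (fun w => f w * g w) v.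
Proof.
  intros Hf Hg. unfold lap. rewrite <- fold_right_Rplus_map_scal.
  apply fold_right_Rplus_map_le. intros w _.
  pose proof (Hf w). pose proof (Hg w). nra.
Qed.

Lemma derivable_pt_lim_lap (g : V -> R -> R) (g' : V -> R) (v : V) (s : R) :
  (forall w, derivable_pt_lim (g w) s (g' w)) ->
  derivable_pt_lim (fun r => lap vs adj (fun w => g w r) v) s (lap vs adj g' v).
Proof.
  intros Hg. unfold lap.
  apply (derivable_pt_lim_fold_right_Rplus (fun w r => g w r - g v r)).
  intros w _. apply derivable_pt_lim_minus; apply Hg.
Qed.

Variables (psi dpsi : R -> R).
Hypothesis psi_C1 : C1_pos psi dpsi.

Lemma derivable_pt_lim_psi_ratio (f : V -> R -> R) (f' : V -> R) (w v : V) (s : R) :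
  (forall y, derivable_pt_lim (f y) s (f' y)) -> (forall y, 0 < f y s) ->
  derivable_pt_lim (fun r => psi (f w r / f v r)) s
    (dpsi (f w s / f v s) * (f w s / f v s) * (f' w / f w s - f' v / f v s)).
Proof.
  intros Hf Hpos. pose proof (Hpos w). pose proof (Hpos v).
  assert (Hchain := derivable_pt_lim_comp _ psi s _ _
    (derivable_pt_lim_div (f w) (f v) s _ _ (Hf w) (Hf v) ltac:(lra))
    (proj1 (psi_C1 _ (Rdiv_lt_0_compat _ _ (Hpos w) (Hpos v))))).
  replace (dpsi (f w s / f v s) * (f w s / f v s) * (f' w / f w s - f' v / f v s))
    with (dpsi (f w s / f v s) * ((f' w * f v s - f' v * f w s) / (f v s)²))
    by (unfold Rsqr; field; lra).
  exact Hchain.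
Qed.

(* Along any positive differentiable path the time derivative of Δ^ψ has the
   shape of Ω^ψ, with the time derivative in place of Δ. *)
Lemma derivable_pt_lim_lap_psi (f : V -> R -> R) (f' : V -> R) (v : V) (s : R) :
  (forall y, derivable_pt_lim (f y) s (f' y)) -> (forall y, 0 < f y s) ->
  derivable_pt_lim (fun r => lap_psi vs adj psi (fun y => f y r) v) s
    (lap vs adj (fun w => dpsi (f w s / f v s) * (f w s / f v s) *
                          (f' w / f w s - f' v / f v s)) v).
Proof.
  intros Hf Hpos. unfold lap_psi.
  apply (derivable_pt_lim_lap (fun w r => psi (f w r / f v r))).
  intros w. exact (derivable_pt_lim_psi_ratio f f' w v s Hf Hpos).
Qed.

Lemma derivable_pt_lim_lap_psi_heat (u ut : V -> R -> R) (v : V) (s : R) :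
  heat_solution vs adj u ut -> (forall y, 0 < u y s) -> 0 < s ->
  derivable_pt_lim (fun r => lap_psi vs adj psi (fun y => u y r) v) s
    (Omega_psi vs adj dpsi (fun y => u y s) v).
Proof.
  intros Hheat Hpos Hs.
  apply (derivable_pt_lim_lap_psi u (fun y => lap vs adj (fun z => u z s) y)); [|exact Hpos].
  intros y. destruct (Hheat y s ltac:(lra)) as [Hderiv [_ Heq]].
  replace (lap vs adj (fun z => u z s) y) with (ut y s) by lra.
  exact (deriv_nonneg_derivable_pt_lim _ _ _ Hs Hderiv).
Qed.

Variable d : R.
Hypothesis d_pos : 0 < d.
Hypothesis curvature : CD_psi vs adj psi dpsi d.

Lemma Omega_psi_ge_at_min_lap_psi (f : V -> R) (v : V) :
  (forall w, 0 < f w) ->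
  (forall w, lap_psi vs adj psi f v <= lap_psi vs adj psi f w) ->
  2 / d * (lap_psi vs adj psi f v) ^ 2 <= Omega_psi vs adj dpsi f v.
Proof.
  intros Hpos Hmin.
  pose proof (curvature f Hpos v) as Hcd. unfold Gamma2_psi in Hcd.
  pose proof (lap_mul_ge_at_min f (lap_psi vs adj psi f) v
                (fun w => Rlt_le _ _ (Hpos w)) Hmin) as Hprod.
  set (H := lap_psi vs adj psi f v) in *.
  set (Lf := lap vs adj f v) in *.
  set (Lprod := lap vs adj (fun w => f w * lap_psi vs adj psi f w) v) in *.
  assert (Hcross : Lf * H / f v - Lprod / f v <= 0).
  { unfold Rdiv. rewrite <- Rmult_minus_distr_r.
    pose proof (Rinv_0_lt_compat _ (Hpos v)). nra. }
  replace (2 / d * H ^ 2) with (2 * (/ d * H ^ 2)) by (field; lra). lra.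
Qed.

End GraphOperators.

Section LiYau.

Variables (V : Type) (vs : list V) (adj : V -> V -> bool).
Variables (psi dpsi : R -> R) (d : R) (u ut : V -> R -> R).
Hypothesis vs_complete : forall v, In v vs.
Hypothesis psi_C1 : C1_pos psi dpsi.
Hypothesis d_pos : 0 < d.
Hypothesis curvature : CD_psi vs adj psi dpsi d.
Hypothesis heat : heat_solution vs adj u ut.
Hypothesis u_pos : forall y t, 0 <= t -> 0 < u y t.

Lemma derivable_pt_lim_weighted_lap_psi (eps : R) (y : V) (r : R) :
  0 < r ->
  derivable_pt_lim (fun t => (t - eps) * - lap_psi vs adj psi (fun z => u z t) y) r
    (- lap_psi vs adj psi (fun z => u z r) y
     + (r - eps) * - Omega_psi vs adj dpsi (fun z => u z r) y).
Proof.
  intros Hr.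
  assert (Hlin : derivable_pt_lim (fun t => t - eps) r 1).
  { replace 1 with (1 - 0) by ring.
    apply (derivable_pt_lim_minus id (fun _ => eps));
      [apply derivable_pt_lim_id | apply derivable_pt_lim_const]. }
  assert (Hlap := derivable_pt_lim_opp _ _ _
    (derivable_pt_lim_lap_psi_heat V vs adj psi dpsi psi_C1 u ut y r heat
       (fun z => u_pos z r (Rlt_le _ _ Hr)) Hr)).
  replace (- lap_psi vs adj psi (fun z => u z r) y
           + (r - eps) * - Omega_psi vs adj dpsi (fun z => u z r) y)
    with (1 * - lap_psi vs adj psi (fun z => u z r) y
          + (r - eps) * - Omega_psi vs adj dpsi (fun z => u z r) y) by ring.
  exact (derivable_pt_lim_mult (fun t => t - eps) _ r _ _ Hlin Hlap).
Qed.

Lemma weighted_lap_psi_bound (eps T : R) (x : V) :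
  0 < eps <= T -> (T - eps) * - lap_psi vs adj psi (fun z => u z T) x <= d / 2.
Proof.
  intros HeT.
  set (F := fun y t => (t - eps) * - lap_psi vs adj psi (fun z => u z t) y).
  destruct (continuity_ab_maj_list F eps T x vs) as [y [s [Hs Hmax]]]; [lra | |].
  { intros y c Hc. apply derivable_continuous_pt.
    eexists. apply derivable_pt_lim_weighted_lap_psi. lra. }
  apply Rle_trans with (F y s); [apply Hmax; [now left | lra] |].
  unfold F. set (P := - lap_psi vs adj psi (fun z => u z s) y).
  destruct (Rle_or_lt P 0) as [HP | HP]; [nra |].
  destruct (Req_dec s eps) as [-> | Hs_eps]; [lra |].
  assert (Hmin : forall w, lap_psi vs adj psi (fun z => u z s) y
                           <= lap_psi vs adj psi (fun z => u z s) w).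
  { intros w. pose proof (Hmax w (or_intror (vs_complete w)) s Hs) as Hw.
    unfold F in Hw. apply Rmult_le_reg_l with (s - eps); lra. }
  assert (Htime : 0 <= P + (s - eps) * - Omega_psi vs adj dpsi (fun z => u z s) y).
  { apply (derivable_pt_lim_ge0_at_left_max (F y) s _ (s - eps)); [lra | |].
    - apply derivable_pt_lim_weighted_lap_psi. lra.
    - intros h Hh. apply Hmax; [now right | lra]. }
  assert (HOmega := Omega_psi_ge_at_min_lap_psi V vs adj psi dpsi d d_pos curvature
    (fun z => u z s) y (fun z => u_pos z s ltac:(lra)) Hmin).
  replace (lap_psi vs adj psi (fun z => u z s) y ^ 2) with (P * P) in HOmega
    by (unfold P; ring).
  set (Om := Omega_psi vs adj dpsi (fun z => u z s) y) in *.
  assert (Hquad : (s - eps) * (2 / d * (P * P)) <= P).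
  { apply Rle_trans with ((s - eps) * Om); [apply Rmult_le_compat_l; lra |].
    rewrite Ropp_mult_distr_r_reverse in Htime. lra. }
  assert (Hlin : (s - eps) * (2 / d * P) <= 1).
  { apply Rmult_le_reg_r with P; [exact HP|]. lra. }
  replace ((s - eps) * P) with (d / 2 * ((s - eps) * (2 / d * P))) by (field; lra).
  replace (d / 2) with (d / 2 * 1) at 2 by ring.
  apply Rmult_le_compat_l; lra.
Qed.

End LiYau.

Lemma le_of_forall_shrunk_weight (T A c : R) :
  0 < T -> (forall eps, 0 < eps <= T -> (T - eps) * A <= c) -> T * A <= c.
Proof.
  intros HT Hw. pose proof (Hw T ltac:(lra)) as Hc0.
  apply Rnot_lt_le. intros Hlt.
  assert (HA : 0 < A) by nra.
  set (eps := (T * A - c) / (2 * A)).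
  assert (Heps : 0 < eps <= T).
  { unfold eps. split; [apply Rdiv_lt_0_compat; lra |].
    apply Rmult_le_reg_r with (2 * A); [lra|].
    replace ((T * A - c) / (2 * A) * (2 * A)) with (T * A - c) by (field; lra). nra. }
  pose proof (Hw eps Heps) as Heps_bound.
  replace ((T - eps) * A) with ((T * A + c) / 2) in Heps_bound
    by (unfold eps; field; lra).
  lra.
Qed.

Theorem mainTheorem7 (V : Type) (vs : list V) (adj : V -> V -> bool)
  (psi dpsi : R -> R) (d : R) (u ut : V -> R -> R) :
  finite_graph vs adj ->
  C1_pos psi dpsi ->
  0 < d ->
  CD_psi vs adj psi dpsi d ->
  heat_solution vs adj u ut ->
  (forall x t, 0 <= t -> 0 < u x t) ->
  forall x t, 0 < t -> - lap_psi vs adj psi (fun y => u y t) x <= d / (2 * t).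
Proof.
  intros [_ [Hcomplete _]] HC1 Hd Hcd Hheat Hpos x t Ht.
  assert (Hbound : t * - lap_psi vs adj psi (fun y => u y t) x <= d / 2).
  { apply le_of_forall_shrunk_weight; [exact Ht |]. intros eps Heps.
    exact (weighted_lap_psi_bound V vs adj psi dpsi d u ut
             Hcomplete HC1 Hd Hcd Hheat Hpos eps t x Heps). }
  replace (d / (2 * t)) with (/ t * (d / 2)) by (field; lra).
  apply Rmult_le_reg_l with t; [exact Ht |].
  replace (t * (/ t * (d / 2))) with (d / 2) by (field; lra). exact Hbound.
Qed.
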